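(* Let $X,Y\in\{\mathsf{T},\mathsf{S}\}^*$ with $X\sqsubseteq Y$. Then: (idempotence) $X\mathsf{T}\mathsf{T}\equiv X\mathsf{T}$ and $X\mathsf{S}\mathsf{S}\equiv X\mathsf{S}$; (monotonicity) $X\mathsf{T}\sqsubseteq Y\mathsf{T}$; (inflation/deflation) $X\sqsubseteq X\mathsf{T}$ and $X\mathsf{S}\sqsubseteq X$; (maximality) $X\sqsubseteq \mathsf{T}$.
   Context: Fix attribute–taxonomy pairs $A_1{:}T_1,\dots,A_d{:}T_d$ with distinct attribute names, where each taxonomy $T_i=(V_i,\le_{V_i})$ is a poset. A t-tuple over a t-schema $S\subseteq\{A_1{:}T_1,\dots,A_d{:}T_d\}$ maps each $A_i$ in $S$ to a value of $V_i$; $\mathcal{D}$ is the set of all t-tuples over all such t-schemas. A preference relation is a binary relation $\succeq$ on $\mathcal{D}$; its strict part is $t_1\succ t_2$ iff $t_1\succeq t_2$ and not $t_2\succeq t_1$. Preferences are given by a formula $F(x,y)=\bigvee_i P_i(x,y)$, a disjunction of statements; each statement $P_i$ is a disjunction of clauses, each clause a satisfiable conjunction of atoms of the forms $x[A_i]\le_{V_i} v$, $x[A_i]\not\le_{V_i} v$, $y[A_i]\le_{V_i} v$, $y[A_i]\not\le_{V_i} v$; the formula induces $t_1\succeq t_2\iff F(t_1,t_2)$. Operator $\mathsf{T}$ maps a formula to one (obtained by adding statements built from composable clause pairs) inducing the transitive closure over $\mathcal{D}$ of the induced relation. Operator $\mathsf{S}$ (specificity-based refinement): repeat rounds; in a round,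 for each statement $P_i$ let $\mathrm{Impl}(P_i)$ be the set of statements $P_j$ such that $P_j(t_2,t_1)\Rightarrow P_i(t_1,t_2)$ for all $t_1,t_2\in\mathcal{D}$ but not conversely; simultaneously replace every $P_i$ with nonempty $\mathrm{Impl}(P_i)$ by $P_i(x,y)\wedge\bigwedge_{P_j\in \mathrm{Impl}(P_i)}\neg P_j(y,x)$; stop when no $\mathrm{Impl}$ set is nonempty. After each operator, contradictory clauses and subsumed statements are removed. For $X\in\{\mathsf{T},\mathsf{S}\}^*$, $\succeq_X$ is the relation induced by applying the operators of $X$ in order to the initial formula ($\varepsilon$ is the empty sequence). Containment $X\sqsubseteq Y$ means $\succeq_X\subseteq\succeq_Y$ for every initial preference formula; $X\equiv Y$ means $X\sqsubseteq Y$ and $Y\sqsubseteq X$. *)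

From Stdlib Require Import ClassicalEpsilon Relation_Operators.
From mathcomp Require Import all_boot.
Set Implicit Arguments.
Unset Strict Implicit.
Unset Printing Implicit Defensive.

Record taxonomy := Taxonomy {
  tcar : Type;
  tle : tcar -> tcar -> Prop;
  tle_refl : forall v, tle v v;
  tle_antisym : forall u v, tle u v -> tle v u -> u = v;
  tle_trans : forall u v w, tle u v -> tle v w -> tle u w
}.

Definition pb (P : Prop) : bool :=
  if excluded_middle_informative P then true else false.

Section Preferences.
(* attributes A_1..A_d are the indices i : 'I_d, attribute A_i has taxonomy Tx i *)
Variables (d : nat) (Tx : 'I_d -> taxonomy).

(* A t-tuple: a partial assignment; its t-schema is the set of i with t i <> None.
   The type ttuple is the set D of all t-tuples over all t-schemas. *)
Definition ttuple := forall i : 'I_d, option (tcar (Tx i)).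

(* Atom:  (x or y)[A_i] <= v   (a_pos = true)   or   (x or y)[A_i] </= v  (a_pos = false).
   a_onx = true means the atom is about x, false means about y. *)
Record atom := Atom {
  a_onx : bool;
  a_attr : 'I_d;
  a_pos : bool;
  a_val : tcar (Tx a_attr)
}.

(* t[A_i] <= v holds iff A_i is in the schema of t and t[A_i] <=_{V_i} v;
   t[A_i] </= v is its negation. *)
Definition atom_holds (a : atom) (t1 t2 : ttuple) : Prop :=
  let t := if a_onx a then t1 else t2 in
  let le_holds :=
    match t (a_attr a) with
    | Some v => tle v (a_val a)
    | None => False
    end in
  if a_pos a then le_holds else ~ le_holds.

Definition clause := seq atom.
Definition statement := seq clause.
Definition formula := seq statement.

Definition clause_holds (c : clause) (t1 t2 : ttuple) : Prop :=
  foldr (fun a P => atom_holds a t1 t2 /\ P) True c.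

Definition stmt_holds (P : statement) (t1 t2 : ttuple) : Prop :=
  exists c, List.In c P /\ clause_holds c t1 t2.

Definition induced (F : formula) (t1 t2 : ttuple) : Prop :=
  exists P, List.In P F /\ stmt_holds P t1 t2.

Definition clause_sat (c : clause) : Prop :=
  exists t1 t2, clause_holds c t1 t2.

Definition wf_formula (F : formula) : Prop :=
  forall P c, List.In P F -> List.In c P -> clause_sat c.

(* flip a (x,y) is equivalent to ~ a (y,x) *)
Definition flip (a : atom) : atom :=
  @Atom (~~ a_onx a) (a_attr a) (~~ a_pos a) (a_val a).

(* ~ c(y,x) as a statement (DNF) *)
Definition negclause (c : clause) : statement := [seq [:: flip a] | a <- c].

Definition conjS (P Q : statement) : statement :=
  [seq c1 ++ c2 | c1 <- P, c2 <- Q].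

(* ~ P(y,x) as a statement (DNF) *)
Definition negstmt (P : statement) : statement :=
  foldr (fun c acc => conjS (negclause c) acc) [:: [::]] P.

Definition in_impl (Pj Pi : statement) : Prop :=
  (forall t1 t2, stmt_holds Pj t2 t1 -> stmt_holds Pi t1 t2) /\
  ~ (forall t1 t2, stmt_holds Pi t1 t2 -> stmt_holds Pj t2 t1).

Definition impl_set (F : formula) (Pi : statement) : seq statement :=
  [seq Pj <- F | pb (in_impl Pj Pi)].

Definition refine (F : formula) (Pi : statement) : statement :=
  foldr (fun Pj acc => conjS acc (negstmt Pj)) Pi (impl_set F Pi).

(* one round: simultaneous replacement *)
Definition S_round (F : formula) : formula := [seq refine F Pi | Pi <- F].

Definition no_impl (F : formula) : Prop :=
  forall Pi Pj, List.In Pi F -> List.In Pj F -> ~ in_impl Pj Pi.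

Inductive S_iter : formula -> formula -> Prop :=
| S_done F : no_impl F -> S_iter F F
| S_more F G : ~ no_impl F -> S_iter (S_round F) G -> S_iter F G.

Definition remove_contradictory (F : formula) : formula :=
  [seq [seq c <- P | pb (clause_sat c)] | P <- F].

Definition stmt_impl (P Q : statement) : Prop :=
  forall t1 t2, stmt_holds P t1 t2 -> stmt_holds Q t1 t2.

(* statement k is subsumed if it implies another statement l, strictly, or
   equivalently and l occurs earlier (so one copy of equivalent statements is kept) *)
Definition subsumed (F : formula) (k : nat) : Prop :=
  exists l, l < size F /\ l <> k /\
    stmt_impl (nth [::] F k) (nth [::] F l) /\
    (~ stmt_impl (nth [::] F l) (nth [::] F k) \/ l < k).

Definition remove_subsumed (F : formula) : formula :=
  [seq nth [::] F k | k <- iota 0 (size F) & ~~ pb (subsumed F k)].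

Definition cleanup (F : formula) : formula := remove_subsumed (remove_contradictory F).

(* T adds statements (built from satisfiable composed clauses) so that the
   resulting formula induces the transitive closure over D of the induced relation. *)
Definition T_spec (Top : formula -> formula) : Prop :=
  forall F, wf_formula F ->
    wf_formula (Top F) /\ (exists G, Top F = F ++ G) /\
    (forall t1 t2, induced (Top F) t1 t2 <-> clos_trans ttuple (induced F) t1 t2).

Inductive op := OpT | OpS.

Section Eval.
Variable Top : formula -> formula.

Inductive op_step : op -> formula -> formula -> Prop :=
| stepT F : op_step OpT F (cleanup (Top F))
| stepS F G : S_iter F G -> op_step OpS F (cleanup G).

Inductive eval : seq op -> formula -> formula -> Prop :=
| eval_nil F : eval [::] F F
| eval_cons o X F G H : op_step o F G -> eval X G H -> eval (o :: X) F H.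

Definition contained (X Y : seq op) : Prop :=
  forall F, wf_formula F -> forall G H, eval X F G -> eval Y F H ->
    forall t1 t2, induced G t1 t2 -> induced H t1 t2.

Definition op_equiv (X Y : seq op) : Prop := contained X Y /\ contained Y X.
End Eval.
End Preferences.

(* Every operator is followed by a cleanup, and cleanup does not change the
   induced relation: dropping unsatisfiable clauses is harmless, and every
   subsumed statement is implied by a surviving one.  So T replaces the induced
   relation by its transitive closure, while S only shrinks it, since refinement
   conjoins extra conditions to each statement.  An S run stops in a formula
   without Impl pairs, a property which only depends on the semantics of the
   statements and thus survives cleanup; a second S is therefore a no-op.  The
   remaining claims are the facts that transitive closure is monotone,
   inflationary and idempotent, together with determinism of evaluation. *)
From Stdlib Require Import ClassicalEpsilon Relation_Definitions Relation_Operators.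
From mathcomp Require Import all_boot zify.

Set Implicit Arguments.
Unset Strict Implicit.
Unset Printing Implicit Defensive.

Lemma pbP (P : Prop) : pb P = true <-> P.
Proof. by rewrite /pb; case: excluded_middle_informative. Qed.

Lemma In_mem (T : eqType) (x : T) (s : seq T) : List.In x s <-> x \in s.
Proof.
elim: s => [|a s IH] //=; rewrite in_cons IH.
by split=> [[->|->]|/orP[/eqP->|]]; rewrite ?eqxx ?orbT; auto.
Qed.

Lemma In_cat {A : Type} (x : A) (s t : seq A) :
  List.In x (s ++ t) <-> List.In x s \/ List.In x t.
Proof. by elim: s => [|a s IH] /=; [tauto | rewrite IH; tauto]. Qed.

Lemma In_map {A B : Type} (f : A -> B) (s : seq A) (y : B) :
  List.In y (map f s) <-> exists x, List.In x s /\ y = f x.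
Proof.
elim: s => [|a s IH] /=; first by split=> // -[x []].
rewrite IH; split=> [[<-|[x [hx ->]]]|[x [[<-|hx] ->]]]; eauto.
Qed.

Lemma In_filter {A : Type} (p : pred A) (s : seq A) (x : A) :
  List.In x (filter p s) <-> List.In x s /\ p x.
Proof.
elim: s => [|a s IH] /=; first by split=> -[].
case pa: (p a) => /=; rewrite IH; split.
- by case=> [<-|[]]; tauto.
- by case=> [[<-|]]; tauto.
- by case; tauto.
- by case=> [[<-|]]; [rewrite pa | tauto].
Qed.

Lemma In_nth {A : Type} (x0 : A) (s : seq A) (k : nat) :
  k < size s -> List.In (nth x0 s k) s.
Proof. by elim: s k => [|a s IH] [|k] //= hk; [left | right; apply: IH]. Qed.

Lemma In_nth_index {A : Type} (x0 : A) (s : seq A) (x : A) :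
  List.In x s -> exists k, k < size s /\ x = nth x0 s k.
Proof.
elim: s => [|a s IH] //= [<-|/IH [k [hk ->]]]; first by exists 0.
by exists k.+1.
Qed.

Lemma In_allpairs {A B C : Type} (f : A -> B -> C) (s : seq A) (t : seq B) (z : C) :
  List.In z [seq f x y | x <- s, y <- t] ->
  exists x y, List.In x s /\ List.In y t /\ z = f x y.
Proof.
elim: s => [|a s IH] //= /In_cat [/In_map [y [hy ->]]|/IH [x [y [hx [hy ->]]]]].
  by exists a, y; split; [left|].
by exists x, y; split; [right|].
Qed.

Lemma count_lt_subpred {T : Type} (a1 a2 : pred T) (s : seq T) :
  subpred a1 a2 -> has (predD a2 a1) s -> count a1 s < count a2 s.
Proof.
move=> s12; elim: s => [|x s IH] //= /orP [/andP [/negbTE a1x a2x]|/IH].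
  by rewrite a1x a2x add0n add1n ltnS sub_count.
by case a1x: (a1 x); rewrite ?(s12 _ a1x); case: (a2 x) => /=; lia.
Qed.

Lemma clos_trans_monotone {A : Type} (R1 R2 : relation A) :
  inclusion A R1 R2 -> inclusion A (clos_trans A R1) (clos_trans A R2).
Proof.
move=> sub x y; elim=> [a b /sub|a b c _ h1 _ h2]; [exact: t_step | exact: t_trans h1 h2].
Qed.

Lemma clos_trans_transitive {A : Type} (R : relation A) :
  Relation_Definitions.transitive A R -> inclusion A (clos_trans A R) R.
Proof. by move=> trR x y; elim=> // a b c _ h1 _ h2; apply: trR h1 h2. Qed.

Section Preferences.
Variables (d : nat) (Tx : 'I_d -> taxonomy).

Lemma clause_holds_catl (c1 c2 : clause Tx) t1 t2 :
  clause_holds (c1 ++ c2) t1 t2 -> clause_holds c1 t1 t2.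
Proof. by elim: c1 => [|a c IH] //= [h1 /IH]. Qed.

Lemma stmt_holds_conjSl (P Q : statement Tx) t1 t2 :
  stmt_holds (conjS P Q) t1 t2 -> stmt_holds P t1 t2.
Proof.
case=> c [hc h].
have [c1 [c2 [hc1 [_ e]]]] := @In_allpairs _ _ _ (@cat _) _ _ _ hc; subst c.
by exists c1; split=> //; apply: clause_holds_catl h.
Qed.

Lemma stmt_holds_refine (F : formula Tx) Pi t1 t2 :
  stmt_holds (refine F Pi) t1 t2 -> stmt_holds Pi t1 t2.
Proof. by rewrite /refine; elim: (impl_set F Pi) => //= Pj s IH /stmt_holds_conjSl. Qed.

Lemma induced_S_round (F : formula Tx) :
  inclusion _ (induced (S_round F)) (induced F).
Proof.
move=> t1 t2 [_ [/In_map [Pi [hPi ->]] /stmt_holds_refine h]]; by exists Pi.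
Qed.

Lemma induced_S_iter (F G : formula Tx) :
  S_iter F G -> inclusion _ (induced G) (induced F).
Proof.
by elim=> [F0 _ t1 t2 //|F0 G0 _ _ IH t1 t2 /IH]; apply: induced_S_round.
Qed.

Lemma S_iter_functional (F G1 G2 : formula Tx) :
  S_iter F G1 -> S_iter F G2 -> G1 = G2.
Proof.
move=> h; elim: h G2 => [F0 n|F0 G0 n _ IH] G2 h2; inversion h2; subst => //.
exact: IH.
Qed.

Lemma S_iter_no_impl (F G : formula Tx) : S_iter F G -> no_impl G.
Proof. by elim. Qed.

Lemma stmt_holds_filter_sat (P : statement Tx) t1 t2 :
  stmt_holds [seq c <- P | pb (clause_sat c)] t1 t2 <-> stmt_holds P t1 t2.
Proof.
split=> -[c [hc h]]; exists c; split=> //; first by case/In_filter: hc.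
by apply/In_filter; split=> //; apply/pbP; exists t1, t2.
Qed.

Lemma In_remove_contradictory (F : formula Tx) P :
  List.In P (remove_contradictory F) <->
  exists Q, List.In Q F /\ P = [seq c <- Q | pb (clause_sat c)].
Proof. exact: In_map. Qed.

Lemma stmt_impl_trans (P Q R : statement Tx) :
  stmt_impl P Q -> stmt_impl Q R -> stmt_impl P R.
Proof. by move=> hPQ hQR t1 t2 /hPQ /hQR. Qed.

Definition implied_count (F : formula Tx) (k : nat) : nat :=
  count (fun j => pb (stmt_impl (nth [::] F k) (nth [::] F j))) (iota 0 (size F)).

Lemma implied_count_le (F : formula Tx) k l :
  stmt_impl (nth [::] F k) (nth [::] F l) -> implied_count F l <= implied_count F k.
Proof.
by move=> hkl; apply: sub_count => j /pbP hl; apply/pbP; apply: stmt_impl_trans hl.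
Qed.

Lemma implied_count_lt (F : formula Tx) k l : k < size F ->
  stmt_impl (nth [::] F k) (nth [::] F l) ->
  ~ stmt_impl (nth [::] F l) (nth [::] F k) ->
  implied_count F l < implied_count F k.
Proof.
move=> hk hkl hlk; apply: count_lt_subpred.
  by move=> j /pbP hl; apply/pbP; apply: stmt_impl_trans hl.
apply/hasP; exists k; first by rewrite mem_iota.
by apply/andP; split; [apply/negP => /pbP | apply/pbP].
Qed.

(* The measure orders indices lexicographically by (implied_count, index). *)
Lemma subsumed_measure_lt (F : formula Tx) k : k < size F -> subsumed F k ->
  exists l, l < size F /\ stmt_impl (nth [::] F k) (nth [::] F l) /\
    implied_count F l * size F + l < implied_count F k * size F + k.
Proof.
move=> hk [l [hl [_ [hkl hor]]]]; exists l; split=> //; split=> //.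
case: (excluded_middle_informative (stmt_impl (nth [::] F l) (nth [::] F k))) => hlk.
  have eq_count : implied_count F l = implied_count F k.
    by apply/eqP; rewrite eqn_leq !implied_count_le.
  case: hor => // hlk_lt; lia.
have := implied_count_lt hk hkl hlk; nia.
Qed.

Lemma unsubsumed_above (F : formula Tx) k : k < size F ->
  exists l, l < size F /\ ~ subsumed F l /\ stmt_impl (nth [::] F k) (nth [::] F l).
Proof.
have [m] := ubnP (implied_count F k * size F + k); elim: m k => // m IH k.
rewrite ltnS => hm hk.
case: (excluded_middle_informative (subsumed F k)) => hsub.
  have [l [hl [hkl hlt]]] := subsumed_measure_lt hk hsub.
  have [l' [hl' [hns hll']]] := IH l (leq_trans hlt hm) hl.
  by exists l'; split=> //; split=> //; apply: stmt_impl_trans hll'.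
by exists k; split=> //; split=> // t1 t2.
Qed.

Lemma In_remove_subsumed (G : formula Tx) P :
  List.In P (remove_subsumed G) -> List.In P G.
Proof.
case/In_map=> k [/In_filter [/In_mem hk _] ->]; apply: In_nth.
by rewrite mem_iota in hk.
Qed.

Lemma remove_subsumed_cover (G : formula Tx) P : List.In P G ->
  exists Q, List.In Q (remove_subsumed G) /\ stmt_impl P Q.
Proof.
case/(In_nth_index [::]) => k [hk ->].
have [l [hl [hns hkl]]] := unsubsumed_above hk.
exists (nth [::] G l); split=> //; apply/In_map; exists l; split=> //.
apply/In_filter; split; first by apply/In_mem; rewrite mem_iota.
by apply/negP => /pbP.
Qed.

Lemma In_cleanup (F : formula Tx) P : List.In P (cleanup F) ->
  exists Q, List.In Q F /\ P = [seq c <- Q | pb (clause_sat c)].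
Proof. by move/In_remove_subsumed/In_remove_contradictory. Qed.

Lemma induced_cleanup (F : formula Tx) t1 t2 :
  induced (cleanup F) t1 t2 <-> induced F t1 t2.
Proof.
split=> [[P [/In_cleanup [Q [hQ ->]] /stmt_holds_filter_sat h]]|[Q [hQ h]]].
  by exists Q.
have hQ' : List.In [seq c <- Q | pb (clause_sat c)] (remove_contradictory F).
  by apply/In_remove_contradictory; exists Q.
have [P [hP hQP]] := remove_subsumed_cover hQ'.
by exists P; split=> //; apply/hQP/stmt_holds_filter_sat.
Qed.

Lemma cleanup_wf (F : formula Tx) : wf_formula (cleanup F).
Proof. by move=> P c /In_cleanup [Q [_ ->]] /In_filter [_ /pbP]. Qed.

Lemma no_impl_cleanup (G : formula Tx) : no_impl G -> no_impl (cleanup G).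
Proof.
move=> hG Pi Pj /In_cleanup [Qi [hQi ->]] /In_cleanup [Qj [hQj ->]] [h1 h2].
apply: (hG Qi Qj hQi hQj); split.
  by move=> t1 t2 /stmt_holds_filter_sat /h1 /stmt_holds_filter_sat.
by move=> h; apply: h2 => t1 t2 /stmt_holds_filter_sat /h /stmt_holds_filter_sat.
Qed.

Section Operators.
Variable Top : formula Tx -> formula Tx.

Lemma stepT_inv (F G : formula Tx) : op_step Top OpT F G -> G = cleanup (Top F).
Proof. by inversion 1. Qed.

Lemma stepS_inv (F G : formula Tx) : op_step Top OpS F G ->
  exists2 G0, S_iter F G0 & G = cleanup G0.
Proof. by inversion 1; eauto. Qed.

Lemma op_step_functional o (F G1 G2 : formula Tx) :
  op_step Top o F G1 -> op_step Top o F G2 -> G1 = G2.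
Proof.
case: o => [/stepT_inv -> /stepT_inv -> //|/stepS_inv [G0 h0 ->] /stepS_inv [G1' h1 ->]].
by rewrite (S_iter_functional h0 h1).
Qed.

Lemma op_step_wf o (F G : formula Tx) : op_step Top o F G -> wf_formula G.
Proof. by case=> *; apply: cleanup_wf. Qed.

Lemma eval_nil_inv (F H : formula Tx) : eval Top [::] F H -> H = F.
Proof. by inversion 1. Qed.

Lemma eval_cons_inv o X (F H : formula Tx) : eval Top (o :: X) F H ->
  exists2 G, op_step Top o F G & eval Top X G H.
Proof. by inversion 1; eauto. Qed.

Lemma eval_functional X (F G1 G2 : formula Tx) :
  eval Top X F G1 -> eval Top X F G2 -> G1 = G2.
Proof.
elim: X F => [|o X IH] F; first by move=> /eval_nil_inv -> /eval_nil_inv ->.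
move=> /eval_cons_inv [G s1 h1] /eval_cons_inv [G' s2 h2].
by rewrite (op_step_functional s2 s1) in h2; apply: IH h1 h2.
Qed.

Lemma eval_wf X (F G : formula Tx) : wf_formula F -> eval Top X F G -> wf_formula G.
Proof.
elim: X F => [|o X IH] F hF; first by move/eval_nil_inv ->.
by case/eval_cons_inv => G' /op_step_wf /IH.
Qed.

Lemma eval_snoc X o (F H : formula Tx) : eval Top (X ++ [:: o]) F H ->
  exists2 G, eval Top X F G & op_step Top o G H.
Proof.
elim: X F => [|o' X IH] F /= /eval_cons_inv [G ho hX].
  by rewrite (eval_nil_inv hX); exists F => //; constructor.
have [G' hX' ho'] := IH _ hX.
by exists G' => //; apply: eval_cons ho hX'.
Qed.

Lemma eval_snoc_eq X o (F G G1 H : formula Tx) : eval Top X F G ->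
  op_step Top o G G1 -> eval Top (X ++ [:: o]) F H -> H = G1.
Proof.
move=> hX s /eval_snoc [G' hX' s'].
by rewrite (eval_functional hX' hX) in s'; apply: op_step_functional s' s.
Qed.

Lemma induced_stepS (F G : formula Tx) :
  op_step Top OpS F G -> inclusion _ (induced G) (induced F).
Proof.
by case/stepS_inv=> G0 h0 -> t1 t2 /induced_cleanup; apply: induced_S_iter.
Qed.

Lemma induced_stepS_stepS (F G H : formula Tx) {t1 t2} :
  op_step Top OpS F G -> op_step Top OpS G H -> induced H t1 t2 <-> induced G t1 t2.
Proof.
case/stepS_inv=> G0 /S_iter_no_impl /no_impl_cleanup final -> /stepS_inv [H0 h0 ->].
by rewrite -(S_iter_functional (S_done final) h0); apply: induced_cleanup.
Qed.

Hypothesis hTop : T_spec Top.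

Lemma induced_stepT (F G : formula Tx) {t1 t2} : wf_formula F ->
  op_step Top OpT F G -> induced G t1 t2 <-> clos_trans _ (induced F) t1 t2.
Proof.
move=> hF /stepT_inv ->.
by rewrite induced_cleanup; have [_ [_ ->]] := hTop hF.
Qed.

Lemma induced_stepT_transitive (F G : formula Tx) : wf_formula F ->
  op_step Top OpT F G -> Relation_Definitions.transitive _ (induced G).
Proof.
move=> hF hG x y z /(induced_stepT hF hG) hxy /(induced_stepT hF hG) hyz.
exact/(induced_stepT hF hG)/(t_trans _ _ _ _ _ hxy hyz).
Qed.

Lemma induced_stepT_stepT (F G H : formula Tx) {t1 t2} : wf_formula F ->
  op_step Top OpT F G -> op_step Top OpT G H -> induced H t1 t2 <-> induced G t1 t2.
Proof.
move=> hF hG hH; rewrite (induced_stepT (op_step_wf hG) hH).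
by split; [apply: clos_trans_transitive; apply: induced_stepT_transitive hG | apply: t_step].
Qed.

Lemma induced_op_step_clos_trans o (F G : formula Tx) : wf_formula F ->
  op_step Top o F G -> inclusion _ (induced G) (clos_trans _ (induced F)).
Proof.
case: o => hF hG t1 t2 h; first exact/(induced_stepT hF hG).
by apply: t_step; apply: induced_stepS hG _ _ h.
Qed.

Lemma induced_eval_clos_trans X (F G : formula Tx) : wf_formula F ->
  eval Top X F G -> inclusion _ (induced G) (clos_trans _ (induced F)).
Proof.
move=> hF h; elim: h hF => [F0 _ t1 t2|o X0 F0 G0 H0 hs _ IH hF t1 t2 /(IH (op_step_wf hs))].
  exact: t_step.
move/(clos_trans_monotone (induced_op_step_clos_trans hF hs)).
by apply: clos_trans_transitive => x y z; apply: t_trans.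
Qed.

Lemma op_equiv_snoc_twice X o :
  (forall F G H t1 t2, wf_formula F -> op_step Top o F G -> op_step Top o G H ->
     induced H t1 t2 <-> induced G t1 t2) ->
  op_equiv Top (X ++ [:: o; o]) (X ++ [:: o]).
Proof.
move=> idem.
have key F H1 H2 t1 t2 : wf_formula F -> eval Top (X ++ [:: o; o]) F H1 ->
    eval Top (X ++ [:: o]) F H2 -> induced H1 t1 t2 <-> induced H2 t1 t2.
  move=> hF; rewrite -cat_rcons -cats1 => /eval_snoc [G1 /eval_snoc [G hX s1] s2] h2.
  by rewrite (eval_snoc_eq hX s1 h2); apply: idem (eval_wf hF hX) s1 s2.
split=> F hF H1 H2 h1 h2 t1 t2; first by move/(key _ _ _ _ _ hF h1 h2).
by move=> h; apply/(key _ _ _ _ _ hF h2 h1).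
Qed.

Lemma TT_equiv_T X : op_equiv Top (X ++ [:: OpT; OpT]) (X ++ [:: OpT]).
Proof. by apply: op_equiv_snoc_twice => F G H t1 t2 hF; apply: induced_stepT_stepT. Qed.

Lemma SS_equiv_S X : op_equiv Top (X ++ [:: OpS; OpS]) (X ++ [:: OpS]).
Proof. by apply: op_equiv_snoc_twice => F G H t1 t2 _; apply: induced_stepS_stepS. Qed.

Lemma contained_T_monotone X Y :
  contained Top X Y -> contained Top (X ++ [:: OpT]) (Y ++ [:: OpT]).
Proof.
move=> hXY F hF H H' /eval_snoc [G hX s] /eval_snoc [G' hY s'] t1 t2 h.
apply/(induced_stepT (eval_wf hF hY) s').
move/(induced_stepT (eval_wf hF hX) s): h.
by apply: clos_trans_monotone => a b; apply: hXY hX hY a b.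
Qed.

Lemma contained_T_inflationary X : contained Top X (X ++ [:: OpT]).
Proof.
move=> F hF G H hX /eval_snoc [G' hX' s] t1 t2 h.
rewrite (eval_functional hX' hX) in s.
exact/(induced_stepT (eval_wf hF hX) s)/t_step.
Qed.

Lemma contained_S_deflationary X : contained Top (X ++ [:: OpS]) X.
Proof.
move=> F hF H G /eval_snoc [G' hX' s] hX t1 t2.
by rewrite (eval_functional hX' hX) in s; apply: induced_stepS s t1 t2.
Qed.

Lemma contained_T_maximal X : contained Top X [:: OpT].
Proof.
move=> F hF G H hX /eval_cons_inv [H' s /eval_nil_inv ->] t1 t2 h.
exact/(induced_stepT hF s)/(induced_eval_clos_trans hF hX).
Qed.

End Operators.
End Preferences.

Theorem mainTheorem2 (d : nat) (Tx : 'I_d -> taxonomy)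
  (Top : formula Tx -> formula Tx) (hTop : T_spec Top)
  (X Y : seq op) (hXY : contained Top X Y) :
  (* idempotence *)
  op_equiv Top (X ++ [:: OpT; OpT]) (X ++ [:: OpT]) /\
  op_equiv Top (X ++ [:: OpS; OpS]) (X ++ [:: OpS]) /\
  (* monotonicity *)
  contained Top (X ++ [:: OpT]) (Y ++ [:: OpT]) /\
  (* inflation / deflation *)
  contained Top X (X ++ [:: OpT]) /\
  contained Top (X ++ [:: OpS]) X /\
  (* maximality *)
  contained Top X [:: OpT].
Proof.
split; first exact: TT_equiv_T.
split; first exact: SS_equiv_S.
split; first exact: contained_T_monotone.
split; first exact: contained_T_inflationary.
split; first exact: contained_S_deflationary.
exact: contained_T_maximal.
Qed.
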